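(* Let $G=(V,E)$ be a finite directed acyclic graph with $V=\{v_1,\dots,v_n\}$, $G'=(V,E')$ its minimum equivalent graph, and $B$ the associated bipartite graph. For every matching $m$ of $B$, $\mathrm{min}_{sync}(G',\Phi(m))=|E'|-|m|$.
   Context: A path from $u$ to $v$ in a directed graph is a nonempty sequence of edges $(u,w_1),\dots,(w_k,v)$ of that graph. The minimum equivalent graph (MEG) of a finite DAG $G=(V,E)$ is the subgraph $G'=(V,E')$, $E'\subseteq E$, with the same vertex set and the smallest number of edges among subgraphs having the same reachability relation as $G$. The bipartite graph $B=(V_1,V_2,E_B)$ has $V_1=\{x_1,\dots,x_n\}$, $V_2=\{y_1,\dots,y_n\}$ and $E_B=\{(x_i,y_j) : (v_i,v_j)\in E'\}$; a matching is a set of edges of $E_B$ no two sharing an endpoint. Let $S=\{s_1,\dots,s_n\}$ be a set of streams; a stream assignment is a function $V\to S$, considered up to permutation of $S$. For a matching $m$, $\Phi(m)$ is the stream assignment obtained by starting from the partition $\{\{v_1\},\dots,\{v_n\}\}$, merging, for each $(x_i,y_j)\in m$, the blocks containing $v_i$ and $v_j$, and assigning two vertices the same stream iff they lie in the same block. A synchronization plan $\Lambda\subseteq E'$ is safe for a stream assignment $f$ on $G'$ if for every edge $(u,v)\in E'$, either $f(u)=f(v)$ or there is a path $P\subseteq E'$ from $u$ to $v$ with $P\cap\Lambda\neq\emptyset$; $\mathrm{min}_{sync}(G',f)=\min\{|\Lambda| : \Lambda\subseteq E' \text{ safe for } f \text{ on } G'\}$. *)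

From mathcomp Require Import all_boot.
Set Implicit Arguments. Unset Strict Implicit. Unset Printing Implicit Defensive.

Section Defs.
Variable n : nat.
Notation V := 'I_n.
Notation edges := {set V * V}.

Definition epath (E : edges) (u : V) (p : seq V) : bool :=
  path (fun x y => (x, y) \in E) u p.

Definition path_edges (u : V) (p : seq V) : seq (V * V) := zip (u :: p) p.

Definition is_path (E : edges) (u v : V) (p : seq V) : Prop :=
  [/\ p != [::], epath E u p & last u p = v].

Definition reach (E : edges) (u v : V) : Prop := exists p, is_path E u v p.

Definition acyclic (E : edges) : Prop := forall v, ~ reach E v v.

Definition same_reach (E1 E2 : edges) : Prop :=
  forall u v, reach E1 u v <-> reach E2 u v.

Definition is_MEG (E E' : edges) : Prop :=
  [/\ E' \subset E, same_reach E' E &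
      forall E'' : edges, E'' \subset E -> same_reach E'' E -> #|E'| <= #|E''|].

(* m is a matching of the bipartite graph B: (x_i, y_j) is encoded as (i, j) *)
Definition is_matching (E' m : edges) : Prop :=
  m \subset E' /\
  forall e1 e2 : V * V, e1 \in m -> e2 \in m -> e1 != e2 ->
    e1.1 != e2.1 /\ e1.2 != e2.2.

(* Phi(m): blocks are the connected components of the undirected graph
   whose edges are m; each vertex is assigned the stream named by the
   canonical representative of its block (streams S = 'I_n). *)
Definition merge_rel (m : edges) : rel V :=
  fun x y => ((x, y) \in m) || ((y, x) \in m).

Definition Phi (m : edges) : V -> V := fun v => root (merge_rel m) v.

Definition safe (E' : edges) (f : V -> V) (L : edges) : Prop :=
  L \subset E' /\
  forall u v : V, (u, v) \in E' ->
    f u = f v \/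
    exists p, is_path E' u v p /\ has (fun e => e \in L) (path_edges u p).

Definition is_min_sync (E' : edges) (f : V -> V) (k : nat) : Prop :=
  (exists L : edges, safe E' f L /\ #|L| = k) /\
  (forall L : edges, safe E' f L -> k <= #|L|).

End Defs.

From mathcomp Require Import all_boot.
Set Implicit Arguments. Unset Strict Implicit. Unset Printing Implicit Defensive.

(* Two structural facts drive the argument.
   (1) A minimum equivalent graph E' of an acyclic graph is acyclic and
       transitively reduced: if (u,v) and (u,w) are edges with w ->* v, then
       w = v (otherwise (u,v) could be deleted without changing
       reachability, contradicting minimality).  Consequently the only path
       of E' from u to v along an edge (u,v) is that edge itself.
   (2) The blocks of Phi(m) for a matching m are directed m-chains; in a
       transitively reduced acyclic graph the endpoints of an edge (u,v) of
       E' lie in the same block exactly when (u,v) belongs to m.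
   By (1), an edge (u,v) is protected by a plan L only if (u,v) itself is in
   L; by (2), the edges needing protection are exactly E' \ m.  Hence the
   safe plans are the sets L with E' \ m <= L <= E', the smallest of which
   has |E' \ m| = |E'| - |m| elements. *)

Section Graphs.
Variable n : nat.
Implicit Types (E S L m : {set 'I_n * 'I_n}) (u v w x y z : 'I_n).

Definition er E : rel 'I_n := fun x y => (x, y) \in E.

Lemma reachP E u v : reach E u v <-> exists w, (u, w) \in E /\ connect (er E) w v.
Proof.
split.
- case=> -[|w p] [//= _ /andP[huw hp] hl].
  by exists w; split=> //; apply/connectP; exists p.
- case=> w [huw /connectP[p hp hl]].
  by exists (w :: p); split=> //=; rewrite huw.
Qed.

Lemma connect_subset E1 E2 x y :
  E1 \subset E2 -> connect (er E1) x y -> connect (er E2) x y.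
Proof.
by move=> sE; apply: connect_sub => a b hab; apply: connect1; apply: (subsetP sE).
Qed.

(* A walk starting at a vertex that cannot reach u never uses an edge out
   of u, so it survives the deletion of (u,v). *)
Lemma connect_avoid E u v x y :
  connect (er E) x y -> ~~ connect (er E) x u -> connect (er (E :\ (u, v))) x y.
Proof.
move=> /connectP[p hp ->] {y}; elim: p x hp => [|z p IHp] x /=; first by rewrite connect0.
case/andP=> hxz hp hxu.
have hneq : x != u by apply: contraNneq hxu => ->; apply: connect0.
apply: (@connect_trans _ _ z).
  apply: connect1; rewrite /er !inE -/(er E x z) hxz andbT.
  by apply: contra hneq => /eqP[->].
by apply: IHp => //; apply: contraNN hxu; apply: connect_trans (connect1 hxz).
Qed.

Lemma remove_bypassed_edge E u v :
  reach (E :\ (u, v)) u v -> same_reach (E :\ (u, v)) E.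
Proof.
set E0 := E :\ (u, v) => huv0.
have huv0c : connect (er E0) u v.
  by case/reachP: huv0 => w [huw hwv]; apply: connect_trans (connect1 huw) hwv.
have sub0 : E0 \subset E by apply: subsetDl.
have lift_connect x y : connect (er E) x y -> connect (er E0) x y.
  apply: connect_sub => a b hab.
  have [[-> ->]|ne] := eqVneq (a, b) (u, v); first exact: huv0c.
  by apply: connect1; rewrite /er !inE ne.
move=> x y; split=> /reachP[z [hxz hzy]].
- by apply/reachP; exists z; split; [apply: (subsetP sub0) | apply: connect_subset hzy].
- have hzy0 := lift_connect _ _ hzy.
  have [exz|ne] := eqVneq (x, z) (u, v).
    case: exz hzy0 => -> -> hvy; case/reachP: huv0 => w [huw hwv].
    by apply/reachP; exists w; split=> //; apply: connect_trans hwv hvy.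
  by apply/reachP; exists z; split=> //; rewrite !inE ne.
Qed.

Definition transitively_reduced E : Prop :=
  forall u v w, (u, v) \in E -> (u, w) \in E -> connect (er E) w v -> w = v.

Lemma MEG_acyclic E E' : acyclic E -> is_MEG E E' -> acyclic E'.
Proof. by move=> acE [_ same _] x hx; apply: (acE x); apply/same. Qed.

Lemma MEG_reduced E E' : acyclic E -> is_MEG E E' -> transitively_reduced E'.
Proof.
move=> acE megE; have acE' := MEG_acyclic acE megE.
case: megE => subE same minE u v w huv huw hwv; apply/eqP; apply: contraT => hneq.
have hwu : ~~ connect (er E') w u.
  by apply/negP => hwu; apply: (acE' u); apply/reachP; exists w.
have bypass : reach (E' :\ (u, v)) u v.
  apply/reachP; exists w; split; last exact: connect_avoid hwv hwu.
  by rewrite !inE huw andbT; apply: contra hneq => /eqP[->].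
have same0 : same_reach (E' :\ (u, v)) E.
  by move=> x y; apply: iff_trans (remove_bypassed_edge bypass x y) (same x y).
have := minE _ (subset_trans (subsetDl _ _) subE) same0.
by rewrite (cardsD1 (u, v) E') huv add1n ltnn.
Qed.

Lemma reduced_edge_path E u v p :
  acyclic E -> transitively_reduced E -> (u, v) \in E -> is_path E u v p -> p = [:: v].
Proof.
move=> acE redE huv [].
case: p => [//|w [|z p]] _ /= /andP[huw hp] hl; first by rewrite hl.
have hwv : w = v by apply: (redE u v w) => //; apply/connectP; exists (z :: p).
by case: (acE v); exists (z :: p); split=> //; rewrite -hwv.
Qed.

(* If every edge (u,v) is its own unique path, and f puts the endpoints of
   an edge in the same stream exactly for the edges of S, then the safe
   plans are the L with E' \ S <= L <= E', so min_sync is |E' \ S|. *)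
Lemma min_sync_unique_paths E' (f : 'I_n -> 'I_n) S :
  (forall u v p, (u, v) \in E' -> is_path E' u v p -> p = [:: v]) ->
  (forall u v, (u, v) \in E' -> f u = f v <-> (u, v) \in S) ->
  is_min_sync E' f #|E' :\: S|.
Proof.
move=> uniqP sameS; split.
- exists (E' :\: S); split=> //; split; first exact: subsetDl.
  move=> u v huv; have [huvS|huvS] := boolP ((u, v) \in S).
    by left; apply/(sameS _ _ huv).
  right; exists [:: v]; split; first by split=> //=; rewrite huv.
  by rewrite /= !inE huvS huv.
- move=> L [_ safeL]; apply: subset_leq_card; apply/subsetP => -[u v].
  rewrite inE => /andP[huvS huv].
  case: (safeL u v huv) => [/(sameS _ _ huv) huvS'|[p [hp hL]]].
    by rewrite huvS' in huvS.
  by move: hL; rewrite (uniqP _ _ _ huv hp) /= orbF.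
Qed.

Section Matching.
Variable m : {set 'I_n * 'I_n}.
Hypothesis m_in_inj : forall a b z, (a, z) \in m -> (b, z) \in m -> a = b.
Hypothesis m_out_inj : forall a b z, (z, a) \in m -> (z, b) \in m -> a = b.

Lemma merge_chain x y :
  connect (merge_rel m) x y -> connect (er m) x y \/ connect (er m) y x.
Proof.
case/connectP=> p hp -> {y}.
elim/last_ind: p hp => [|p z IHp]; first by left; apply: connect0.
rewrite rcons_path last_rcons => /andP[hp hz].
case: (IHp hp) => hxy; case/orP: hz => hz.
- by left; apply: connect_trans hxy (connect1 hz).
- case/connectP: hxy => q; case/lastP: q => [|q a] hq hl.
    by right; rewrite /= in hl; rewrite -hl; apply: connect1.
  move: hq hl; rewrite rcons_path last_rcons => /andP[hq ha] hl.
  rewrite hl in hz; have ha_z := m_in_inj ha hz.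
  by left; apply/connectP; exists q; last rewrite ha_z.
- case/connectP: hxy => -[|a q] hq hl.
    by left; rewrite /= in hl; rewrite hl; apply: connect1.
  case/andP: hq => ha hq; have eaz := m_out_inj ha hz.
  by right; apply/connectP; exists q; rewrite -?eaz.
- by right; apply: connect_trans (connect1 hz) hxy.
Qed.

Lemma Phi_eq x y : (Phi m x == Phi m y) = connect (merge_rel m) x y.
Proof.
have msym : connect_sym (merge_rel m).
  by apply: sym_connect_sym => a b; rewrite /merge_rel orbC.
by apply/eqP/idP => /(rootP msym).
Qed.

Lemma Phi_edge E' u v :
  acyclic E' -> transitively_reduced E' -> m \subset E' -> (u, v) \in E' ->
  (Phi m u = Phi m v) <-> (u, v) \in m.
Proof.
move=> acE' redE' subm huv; split; last first.
  by move=> huvm; apply/eqP; rewrite Phi_eq; apply: connect1; rewrite /merge_rel huvm.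
move/eqP; rewrite Phi_eq => /merge_chain[|hvu]; last first.
  by case: (acE' u); apply/reachP; exists v; split=> //; apply: connect_subset hvu.
case/connectP=> -[|w p] /=.
  move=> _ evu; rewrite evu in huv; case: (acE' u).
  by exists [:: u]; split=> //=; rewrite /epath /= huv.
case/andP=> huw hp hl; have hwv : w = v.
  apply: (redE' u v w) => //; first exact: (subsetP subm).
  by apply: connect_subset subm _; apply/connectP; exists p.
by rewrite -hwv.
Qed.

End Matching.

Lemma matching_inj E' m :
  is_matching E' m ->
  (forall a b z, (a, z) \in m -> (b, z) \in m -> a = b) /\
  (forall a b z, (z, a) \in m -> (z, b) \in m -> a = b).
Proof.
case=> _ disj; split=> a b z ha hb; apply/eqP; apply: contraT => hab.
- have hne : (a, z) != (b, z) by apply: contra hab => /eqP[->].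
  by case: (disj _ _ ha hb hne) => _; rewrite eqxx.
- have hne : (z, a) != (z, b) by apply: contra hab => /eqP[->].
  by case: (disj _ _ ha hb hne); rewrite eqxx.
Qed.

End Graphs.

Theorem theorem3 (n : nat) (E E' : {set 'I_n * 'I_n}) :
  acyclic E -> is_MEG E E' ->
  forall m : {set 'I_n * 'I_n}, is_matching E' m ->
  is_min_sync E' (Phi m) (#|E'| - #|m|).
Proof.
move=> acE megE m matm.
have acE' := MEG_acyclic acE megE.
have redE' := MEG_reduced acE megE.
have [m_in m_out] := matching_inj matm.
have subm : m \subset E' by case: matm.
have -> : #|E'| - #|m| = #|E' :\: m| by rewrite cardsD (setIidPr subm).
apply: min_sync_unique_paths => u v.
- by move=> p; apply: reduced_edge_path.
- by apply: Phi_edge.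
Qed.
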